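(* Let $G$ be a finite group. Then (1) $\mathrm{MinDim}(G)\leq \mathrm{MinInt}(G)$; and (2) $\mathrm{MaxDim}(G)\leq \mathrm{MaxInt}(G)$.
   Context: A subgroup $H$ of a finite group $G$ is a maximal intersection in $G$ if $H=M_1\cap\dots\cap M_t$ for some maximal subgroups $M_1,\dots,M_t$ of $G$ ($t\ge 1$). Let $\mathcal M(G)$ be the poset (under inclusion) consisting of $G$ and all maximal intersections in $G$. A set $\mathcal X$ of maximal subgroups of $G$ is irredundant if the intersection of the members of $\mathcal X$ is not equal to the intersection of the members of any proper subset of $\mathcal X$. $\mathrm{MaxDim}(G)$ is the maximal size of an irredundant set of maximal subgroups of $G$. An irredundant set is maximal irredundant if it is not properly contained in any other irredundant set of maximal subgroups; $\mathrm{MinDim}(G)$ is the minimal size of a maximal irredundant set. An unrefinable chain in $\mathcal M(G)$ is a chain $K_t<K_{t-1}<\dots<K_0$ of elements of $\mathcal M(G)$ to which no further element of $\mathcal M(G)$ can be added (so it runs from the Frattini subgroup $\Phi(G)$ to $G$ with no element of $\mathcal M(G)$ strictly between consecutive terms); its length is $t$. $\mathrm{MinInt}(G)$ and $\mathrm{MaxInt}(G)$ denote the minimal and the maximal length of an unrefinable chain in $\mathcal M(G)$. *)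

From mathcomp Require Import all_boot all_fingroup all_solvable.

Set Implicit Arguments.
Unset Strict Implicit.
Unset Printing Implicit Defensive.

Local Open Scope group_scope.

Section MaxIntersections.
Variable gT : finGroupType.
Implicit Types (G : {group gT}) (X Y C : {set {set gT}}) (H : {set gT}).

Definition maxsubs G : {set {set gT}} := [set M : {set gT} | maximal M G].

(* Intersection of a family of maximal subgroups of G, taken inside G
   (so the empty family has intersection G). *)
Definition capG G X : {set gT} := G :&: \bigcap_(M in X) M.

Definition irredundant G X :=
  (X \subset maxsubs G) &&
  [forall Y : {set {set gT}}, (Y \proper X) ==> (capG G Y != capG G X)].

Definition max_irredundant G X :=
  irredundant G X &&
  [forall Y : {set {set gT}}, (X \proper Y) ==> ~~ irredundant G Y].

Definition max_intersection G H :=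
  [exists X : {set {set gT}},
     [&& X \subset maxsubs G, X != set0 & H == \bigcap_(M in X) M]].

Definition MG G : {set {set gT}} := (G : {set gT}) |: [set H | max_intersection G H].

Definition is_chain C :=
  [forall H1 in C, forall H2 in C, (H1 \subset H2) || (H2 \subset H1)].

(* C (the set of terms K_t < ... < K_0) is an unrefinable chain in M(G):
   a chain of elements of M(G) to which no further element of M(G)
   can be added.  Its length is t = #|C| - 1. *)
Definition unrefinable_chain G C :=
  [&& C \subset MG G, is_chain C &
      [forall H in MG G, (H \notin C) ==> ~~ is_chain (H |: C)]].

Definition chain_length C := (#|C|).-1.

Lemma irredundant0 G : irredundant G set0.
Proof.
apply/andP; split; first exact: sub0set.
by apply/forallP => Y; rewrite properE sub0set andbF.
Qed.

Lemma exists_max_irredundant G :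
  exists n, [exists X, max_irredundant G X && (#|X| == n)].
Proof.
case: (@arg_maxnP _ set0 (irredundant G) (fun X => #|X|) (irredundant0 G)).
move=> X irrX maxX; exists #|X|; apply/existsP; exists X.
rewrite eqxx andbT /max_irredundant irrX /=.
apply/forallP => Y; apply/implyP => XY; apply/negP => irrY.
have h : #|Y| <= #|X| := maxX Y irrY.
by have := leq_trans (proper_card XY) h; rewrite ltnn.
Qed.

Lemma chainG G : ((set1 (G : {set gT})) \subset MG G) && is_chain (set1 (G : {set gT})).
Proof.
apply/andP; split.
  by rewrite sub1set /MG setU11.
apply/forall_inP => H1 /set1P ->; apply/forall_inP => H2 /set1P ->.
by rewrite subxx.
Qed.

Lemma exists_unrefinable_chain G :
  exists n, [exists C, unrefinable_chain G C && (chain_length C == n)].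
Proof.
case: (@arg_maxnP _ (set1 (G : {set gT}))
         (fun C => (C \subset MG G) && is_chain C) (fun C => #|C|) (chainG G)).
move=> C /andP[sCM chC] maxC; exists (chain_length C); apply/existsP; exists C.
rewrite eqxx andbT /unrefinable_chain sCM chC /=.
apply/forall_inP => H HM; apply/implyP => HC; apply/negP => chHC.
have sHCM : H |: C \subset MG G by rewrite subUset sub1set HM sCM.
have h : #|H |: C| <= #|C| by apply: maxC; rewrite sHCM chHC.
by move: h; rewrite cardsU1 HC add1n ltnn.
Qed.

Definition MaxDim G : nat := \max_(X | irredundant G X) #|X|.
Definition MinDim G : nat := ex_minn (exists_max_irredundant G).
Definition MaxInt G : nat := \max_(C | unrefinable_chain G C) chain_length C.
Definition MinInt G : nat := ex_minn (exists_unrefinable_chain G).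

End MaxIntersections.

From mathcomp Require Import all_boot all_fingroup all_solvable.

Set Implicit Arguments.
Unset Strict Implicit.
Unset Printing Implicit Defensive.

(* (1) Walk down an unrefinable chain from G to Phi(G) = capG G (maxsubs G).
   If P covers L in the chain, write L as an intersection of maximal
   subgroups; one of them, M, does not contain P, and P :&: M is an element
   of M(G) squeezed between L and P, hence comparable with the whole chain,
   hence in the chain, hence equal to L.  So each step down costs one maximal
   subgroup, and Phi(G) is the intersection of at most t of them; a minimal
   subfamily with the same intersection is irredundant, and maximal
   irredundant because its intersection is already the smallest possible.
   (2) The partial intersections M_1, M_1 :&: M_2, ... of an irredundant
   family are pairwise distinct and form a chain in M(G) of length #|X|,
   which extends to an unrefinable chain. *)

Section MaxIntersections.
Variables (gT : finGroupType) (G : {group gT}).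
Implicit Types (X Y Z C D : {set {set gT}}) (H K L M P : {set gT}).

Lemma maxsubs_sub M : M \in maxsubs G -> M \subset G.
Proof.
rewrite inE => /maxsetp /andP[_ /proper_sub]; apply: subset_trans.
exact: subset_gen.
Qed.

Lemma capG0 : capG G set0 = G.
Proof. by rewrite /capG big_set0 setIT. Qed.

Lemma capGU1 M X : capG G (M |: X) = capG G X :&: M.
Proof. by rewrite /capG bigcap_setU big_set1 setIA setIAC. Qed.

Lemma capGS X Y : X \subset Y -> capG G Y \subset capG G X.
Proof.
by move=> sXY; rewrite /capG -(setUidPr sXY) bigcap_setU setIA subsetIl.
Qed.

Lemma capG_bigcap X M : X \subset maxsubs G -> M \in X ->
  capG G X = \bigcap_(N in X) N.
Proof.
move=> sX MX; apply/setIidPr.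
exact: bigcap_min MX (maxsubs_sub (subsetP sX M MX)).
Qed.

Lemma MGP H :
  reflect (exists2 X : {set {set gT}}, X \subset maxsubs G & H = capG G X)
          (H \in MG G).
Proof.
apply: (iffP setU1P) => [[-> | ] | [X sX ->]].
- by exists set0; rewrite ?sub0set ?capG0.
- rewrite inE => /existsP[X /and3P[sX /set0Pn[M MX] /eqP ->]].
  by exists X; rewrite // (capG_bigcap sX MX).
- have [-> | [M MX]] := set_0Vmem X; first by left; rewrite capG0.
  right; rewrite inE; apply/existsP; exists X.
  by rewrite sX (capG_bigcap sX MX) eqxx andbT; apply/set0Pn; exists M.
Qed.

Lemma MG_sub H : H \in MG G -> H \subset G.
Proof. by case/MGP => X _ ->; apply: subsetIl. Qed.

Lemma G_MG : (G : {set gT}) \in MG G.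
Proof. exact: setU11. Qed.

Lemma MG_capI H M : H \in MG G -> M \in maxsubs G -> H :&: M \in MG G.
Proof.
case/MGP => X sX -> MM; apply/MGP; exists (M |: X); last by rewrite capGU1.
by rewrite subUset sub1set MM.
Qed.

Lemma capG_maxsubs_MG : capG G (maxsubs G) \in MG G.
Proof. by apply/MGP; exists (maxsubs G). Qed.

Lemma capG_maxsubs_min H : H \in MG G -> capG G (maxsubs G) \subset H.
Proof. by case/MGP => X sX ->; apply: capGS. Qed.

Lemma is_chainU1 H C : is_chain C ->
  (forall K, K \in C -> (H \subset K) || (K \subset H)) -> is_chain (H |: C).
Proof.
move=> /forall_inP chC cmpH.
apply/forall_inP => K1 /setU1P[-> | K1C].
all: apply/forall_inP => K2 /setU1P[-> | K2C].
- by rewrite subxx.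
- exact: cmpH.
- by rewrite orbC cmpH.
- exact: (forall_inP (chC _ K1C)).
Qed.

Section UnrefinableChain.
Variable C : {set {set gT}}.
Hypothesis unrefC : unrefinable_chain G C.

Lemma unrefinable_chain_MG K : K \in C -> K \in MG G.
Proof. by case/and3P: unrefC => sC _ _ /(subsetP sC). Qed.

Lemma unrefinable_chain_cmp K1 K2 : K1 \in C -> K2 \in C ->
  (K1 \subset K2) || (K2 \subset K1).
Proof.
by case/and3P: unrefC => _ /forall_inP chC _ /chC /forall_inP; apply.
Qed.

Lemma unrefinable_chain_mem H : H \in MG G ->
  (forall K, K \in C -> (H \subset K) || (K \subset H)) -> H \in C.
Proof.
case/and3P: unrefC => _ chC /forall_inP unref HM cmpH; apply: contraT => HnC.
by have /implyP/(_ HnC)/negP[] := unref H HM; apply: is_chainU1.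
Qed.

Lemma G_unrefinable_chain : (G : {set gT}) \in C.
Proof.
apply: (unrefinable_chain_mem G_MG) => K /unrefinable_chain_MG/MG_sub.
by move->; rewrite orbT.
Qed.

Lemma capG_maxsubs_unrefinable_chain : capG G (maxsubs G) \in C.
Proof.
apply: (unrefinable_chain_mem capG_maxsubs_MG) => K.
by move/unrefinable_chain_MG/capG_maxsubs_min ->.
Qed.

Definition above L := [set K in C | L \proper K].

Lemma chain_successor L : L \in C -> L != G ->
  exists2 P, P \in above L & forall K, K \in above L -> P \subset K.
Proof.
move=> LC nLG; have GA : (G : {set gT}) \in above L.
  rewrite inE G_unrefinable_chain properEneq nLG.
  by rewrite MG_sub ?unrefinable_chain_MG.
have [P /[dup] AP /setIdP[PC _] minP] :=
  arg_minnP (fun K : {set gT} => #|K|) GA.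
exists P => // K /[dup] AK /setIdP[KC _].
case/orP: (unrefinable_chain_cmp PC KC) => // sKP.
by have /eqP-> : K == P by rewrite eqEcard sKP minP.
Qed.

Lemma chain_cover_step L P : L \in C -> P \in above L ->
    (forall K, K \in above L -> P \subset K) ->
  exists2 M, M \in maxsubs G & L = P :&: M.
Proof.
move=> LC /[dup] AP /setIdP[PC ltLP] minP.
have /MGP[Y sY defL] := unrefinable_chain_MG LC.
have [M MY nsPM] : exists2 M, M \in Y & ~~ (P \subset M).
  apply/exists_inP; rewrite -negb_forall_in; apply: contra (proper_subn ltLP).
  move=> /forall_inP sPY; rewrite defL subsetI MG_sub ?unrefinable_chain_MG //.
  exact/bigcapsP.
have MM := subsetP sY M MY.
have sLPM : L \subset P :&: M.
  rewrite subsetI proper_sub // defL.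
  exact: subset_trans (subsetIr _ _) (bigcap_inf _ MY).
have PMC : P :&: M \in C.
  apply: unrefinable_chain_mem; first by rewrite MG_capI ?unrefinable_chain_MG.
  move=> K KC; case/orP: (unrefinable_chain_cmp KC LC) => [sKL | sLK].
    by rewrite (subset_trans sKL sLPM) orbT.
  have [-> | nKL] := eqVneq K L; first by rewrite sLPM orbT.
  have AK : K \in above L by rewrite inE KC properEneq eq_sym nKL.
  by rewrite (subset_trans (subsetIl _ _) (minP _ AK)).
exists M => //; apply/eqP; rewrite eqEproper sLPM; apply/negP => ltL.
have /minP : P :&: M \in above L by rewrite inE PMC.
by rewrite subsetI subxx (negbTE nsPM).
Qed.

Lemma unrefinable_chain_capG L : L \in C ->
  exists2 X : {set {set gT}}, X \subset maxsubs G &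
    capG G X = L /\ #|X| <= #|above L|.
Proof.
have [n] := ubnP #|above L|; elim: n => // n IHn in L *.
rewrite ltnS => leLn LC.
have [-> | nLG] := eqVneq L G.
  by exists set0; rewrite ?sub0set // capG0 cards0.
have [P /[dup] AP /setIdP[PC ltLP] minP] := chain_successor LC nLG.
have [M MM defL] := chain_cover_step LC AP minP.
have ltAPL : above P \proper above L.
  apply/properP; split; last by exists P; rewrite // inE properxx andbF.
  apply/subsetP => K /setIdP[KC ltPK].
  by rewrite inE KC (proper_trans ltLP ltPK).
have [X sX [defP leX]] := IHn P (leq_trans (proper_card ltAPL) leLn) PC.
exists (M |: X); first by rewrite subUset sub1set MM sX.
split; first by rewrite capGU1 defP defL.
by rewrite cardsU1 (leq_trans (leq_add (leq_b1 _) leX)) ?add1n ?proper_card.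
Qed.

Lemma unrefinable_chain_capG_maxsubs :
  exists2 X : {set {set gT}}, X \subset maxsubs G &
    capG G X = capG G (maxsubs G) /\ #|X| <= chain_length C.
Proof.
have [X sX [defX leX]] := unrefinable_chain_capG capG_maxsubs_unrefinable_chain.
exists X => //; split=> //; apply: leq_trans leX _.
rewrite /chain_length (cardsD1 (capG G (maxsubs G)) C).
rewrite capG_maxsubs_unrefinable_chain add1n /=.
apply/subset_leq_card/subsetP => K /setIdP[KC ltK]; rewrite !inE KC andbT.
by apply: contraTneq ltK => ->; rewrite properxx.
Qed.

End UnrefinableChain.

Lemma irredundant_subfamily X :
  X \subset maxsubs G ->
  exists2 Y : {set {set gT}}, Y \subset X &
    irredundant G Y /\ capG G Y = capG G X.
Proof.
move=> sX; pose sub_same Y := (Y \subset X) && (capG G Y == capG G X).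
have sameX : sub_same X by rewrite /sub_same subxx eqxx.
have [Y /andP[sYX /eqP defY] minY] := arg_minnP (fun Y => #|Y|) sameX.
exists Y => //; split=> //; rewrite /irredundant (subset_trans sYX sX).
apply/forallP => Z; apply/implyP => ltZY; apply: contraTneq (proper_card ltZY).
move=> eqZY; rewrite -leqNgt minY //.
by rewrite /sub_same (subset_trans (proper_sub ltZY)) // eqZY defY /=.
Qed.

Lemma max_irredundant_capG_maxsubs Y :
  irredundant G Y -> capG G Y = capG G (maxsubs G) -> max_irredundant G Y.
Proof.
move=> irrY defY; rewrite /max_irredundant irrY.
apply/forallP => Z; apply/implyP => ltYZ; apply/negP.
case/andP=> sZ /forallP/(_ Y); rewrite ltYZ => /negP; apply.
by rewrite eqEsubset (capGS (proper_sub ltYZ)) andbT defY capGS.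
Qed.

Lemma MinDim_le_card Y : max_irredundant G Y -> MinDim G <= #|Y|.
Proof.
move=> mirrY; rewrite /MinDim; case: ex_minnP => m _; apply.
by apply/existsP; exists Y; rewrite mirrY /=.
Qed.

Lemma MinDim_le_chain_length C :
  unrefinable_chain G C -> MinDim G <= chain_length C.
Proof.
move=> unrefC; have [X sX [defX leX]] := unrefinable_chain_capG_maxsubs unrefC.
have [Y sYX [irrY defY]] := irredundant_subfamily sX.
apply: leq_trans (MinDim_le_card _) (leq_trans (subset_leq_card sYX) leX).
by rewrite max_irredundant_capG_maxsubs ?defY.
Qed.

Lemma MinDim_le_MinInt : MinDim G <= MinInt G.
Proof.
rewrite /MinInt; case: ex_minnP => _ /existsP[C /andP[unrefC /eqP <-]] _.
exact: MinDim_le_chain_length.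
Qed.

Lemma irredundantD1 X M : irredundant G X -> M \in X -> irredundant G (X :\ M).
Proof.
case/andP=> sX /forallP irrX MX.
rewrite /irredundant (subset_trans (subsetDl _ _) sX).
apply/forallP => Z; apply/implyP => /[dup] ltZ /properP[sZ [N NXM NnZ]].
have ltMZ : M |: Z \proper X.
  have [nNM NX] := setD1P NXM; apply/properP; split.
    by rewrite subUset sub1set MX (subset_trans sZ (subsetDl _ _)).
  by exists N; rewrite // !inE negb_or NnZ andbT.
apply/eqP => eqZ; move/implyP: (irrX (M |: Z)) => /(_ ltMZ)/eqP; apply.
by rewrite capGU1 eqZ -capGU1 setD1K.
Qed.

Lemma irredundant_chain X : irredundant G X ->
  exists D : {set {set gT}}, [/\ D \subset MG G, is_chain D, #|D| = #|X|.+1 &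
    forall K, K \in D -> capG G X \subset K].
Proof.
have [n] := ubnP #|X|; elim: n => // n IHn in X *; rewrite ltnS => leXn irrX.
have [-> | [M MX]] := set_0Vmem X.
  exists [set (G : {set gT})]; have /andP[sG chG] := chainG G.
  by split; rewrite ?cards0 ?cards1 // => K /set1P ->; rewrite capG0.
have ltXM : X :\ M \proper X := properD1 MX.
have [D [sD chD cardD capD]] :=
  IHn _ (leq_trans (proper_card ltXM) leXn) (irredundantD1 irrX MX).
have defX : capG G X = capG G (X :\ M) :&: M by rewrite -capGU1 setD1K.
have sXD K : K \in D -> capG G X \subset K.
  by move/capD; apply: subset_trans; rewrite defX subsetIl.
have XnD : capG G X \notin D.
  apply/negP => /capD sXMX; case/andP: irrX => _ /forallP/(_ (X :\ M)).
  move=> /implyP/(_ ltXM)/negP; apply.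
  by rewrite eqEsubset sXMX capGS // subsetDl.
exists (capG G X |: D); split.
- rewrite subUset sub1set sD andbT; apply/MGP; exists X => //.
  by case/andP: irrX.
- by apply: is_chainU1 => // K /sXD ->.
- by rewrite cardsU1 XnD cardD (cardsD1 M X) MX.
- by move=> K /setU1P[-> | /sXD].
Qed.

Lemma chain_sub_unrefinable D : D \subset MG G -> is_chain D ->
  exists2 C, unrefinable_chain G C & D \subset C.
Proof.
move=> sD chD; pose ext C := [&& D \subset C, C \subset MG G & is_chain C].
have extD : ext D by rewrite /ext subxx sD chD.
have [C /and3P[sDC sC chC] maxC] := arg_maxnP (fun C => #|C|) extD.
exists C => //; rewrite /unrefinable_chain sC chC.
apply/forall_inP => H HM; apply/implyP => HnC; apply/negP => chHC.
have extHC : ext (H |: C).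
  by rewrite /ext chHC subUset sub1set HM sC (subset_trans sDC (subsetUr _ _)).
by have := maxC _ extHC; rewrite /= cardsU1 HnC add1n ltnn.
Qed.

Lemma MaxDim_le_MaxInt : MaxDim G <= MaxInt G.
Proof.
apply/bigmax_leqP => X irrX.
have [D [sD chD cardD _]] := irredundant_chain irrX.
have [C unrefC sDC] := chain_sub_unrefinable sD chD.
apply: leq_trans (leq_bigmax_cond _ unrefC).
rewrite /chain_length -ltnS (leq_trans _ (leqSpred _)) //.
by rewrite -cardD subset_leq_card.
Qed.

End MaxIntersections.

Theorem mainTheorem1 (gT : finGroupType) (G : {group gT}) :
  MinDim G <= MinInt G /\ MaxDim G <= MaxInt G.
Proof. by split; [apply: MinDim_le_MinInt | apply: MaxDim_le_MaxInt]. Qed.
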